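(* Let $(\Phi,D)$ be a domain-free information algebra whose lattice $D$ has a top element. Then $(\Phi,D)$ is continuous (resp. s-continuous) if and only if there exists a set $\Upsilon\subseteq\Phi$ containing the empty information $e$ such that: (convergency) every directed subset $X\subseteq\Upsilon$ has a supremum $\vee X$; and (D2) for every $\phi\in\Phi$, the set $\{\psi\in\Upsilon:\psi\ll\phi\}$ is directed and $\phi=\vee\{\psi\in\Upsilon:\psi\ll\phi\}$ (resp. (SD2) for every $\phi\in\Phi$ and $x\in D$, the set $\{\psi\in\Upsilon:\psi=\psi^{\Rightarrow x}\ll\phi\}$ is directed and $\phi^{\Rightarrow x}=\vee\{\psi\in\Upsilon:\psi=\psi^{\Rightarrow x}\ll\phi\}$).
   Context: A domain-free information algebra $(\Phi,D)$ consists of a set $\Phi$, a lattice $D$, a combination $\otimes:\Phi\times\Phi\to\Phi$ and a focusing $\Phi\times D\to\Phi$, $(\psi,x)\mapsto\psi^{\Rightarrow x}$, such that: (1) $\otimes$ is associative and commutative and has a neutral element $e$ (the empty information); (2) $(\psi^{\Rightarrow y})^{\Rightarrow x}=\psi^{\Rightarrow x\wedge y}$; (3) $(\phi^{\Rightarrow x}\otimes\psi)^{\Rightarrow x}=\phi^{\Rightarrow x}\otimes\psi^{\Rightarrow x}$; (4) for every $\psi$ there is $x\in D$ with $\psi^{\Rightarrow x}=\psi$; (5) $\psi\otimes\psi^{\Rightarrow x}=\psi$. $\Phi$ is partially ordered by $\psi\le\phi$ iff $\psi\otimes\phi=\phi$; suprema $\vee$ are with respect to this order. $a\ll b$ ($a$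 way-below $b$) means: for every directed set $X$ with $b\le\vee X$ there is $c\in X$ with $a\le c$. $(\Phi,D)$ (with $D$ having a top element) is called continuous (resp. s-continuous) if there exists a basis $\Gamma\subseteq\Phi$, closed under combination and containing $e$, such that every directed $X\subseteq\Gamma$ has a supremum in $\Phi$, and $\phi=\vee\{\psi\in\Gamma:\psi\ll\phi\}$ for all $\phi\in\Phi$ (resp. $\phi^{\Rightarrow x}=\vee\{\psi\in\Gamma:\psi=\psi^{\Rightarrow x}\ll\phi\}$ for all $\phi\in\Phi$, $x\in D$). *)

From HB Require Import structures.
From mathcomp Require Import all_boot all_order.
Set Implicit Arguments. Unset Strict Implicit. Unset Printing Implicit Defensive.
Import Order.TTheory.
Local Open Scope order_scope.

Section InfoAlgebra.
Variables (disp : Order.disp_t) (D : tLatticeType disp) (Phi : Type).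
Variables (comb : Phi -> Phi -> Phi) (e : Phi) (foc : Phi -> D -> Phi).

Record is_info_algebra : Prop := {
  comb_assoc : forall a b c, comb a (comb b c) = comb (comb a b) c;
  comb_comm  : forall a b, comb a b = comb b a;
  comb_neutral : forall a, comb e a = a;
  foc_transitive : forall psi (x y : D), foc (foc psi y) x = foc psi (x `&` y);
  foc_combination : forall phi psi (x : D),
      foc (comb (foc phi x) psi) x = comb (foc phi x) (foc psi x);
  foc_support : forall psi, exists x : D, foc psi x = psi;
  foc_idempotence : forall psi (x : D), comb psi (foc psi x) = psi
}.

Definition ia_le (psi phi : Phi) : Prop := comb psi phi = phi.

Definition is_upper (X : Phi -> Prop) (s : Phi) : Prop :=
  forall a, X a -> ia_le a s.

Definition is_sup (X : Phi -> Prop) (s : Phi) : Prop :=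
  is_upper X s /\ forall u, is_upper X u -> ia_le s u.

Definition directed (X : Phi -> Prop) : Prop :=
  (exists a, X a) /\
  forall a b, X a -> X b -> exists c, X c /\ ia_le a c /\ ia_le b c.

Definition way_below (a b : Phi) : Prop :=
  forall X : Phi -> Prop, directed X ->
    forall s, is_sup X s -> ia_le b s -> exists c, X c /\ ia_le a c.

Definition continuous_ia : Prop :=
  exists Gamma : Phi -> Prop,
    Gamma e /\ (forall a b, Gamma a -> Gamma b -> Gamma (comb a b)) /\
    (forall X, (forall a, X a -> Gamma a) -> directed X -> exists s, is_sup X s) /\
    (forall phi, is_sup (fun psi => Gamma psi /\ way_below psi phi) phi).

Definition s_continuous_ia : Prop :=
  exists Gamma : Phi -> Prop,
    Gamma e /\ (forall a b, Gamma a -> Gamma b -> Gamma (comb a b)) /\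
    (forall X, (forall a, X a -> Gamma a) -> directed X -> exists s, is_sup X s) /\
    (forall phi (x : D),
        is_sup (fun psi => Gamma psi /\ psi = foc psi x /\ way_below psi phi)
               (foc phi x)).

End InfoAlgebra.

(** The forward directions take the basis itself for [Ups]: the basis
    elements way below [phi] (and, for s-continuity, supported on [x]) form
    a directed set because [e] is way below everything and way-belowness and
    support are preserved by combination.  For the converses take the whole
    of [Phi] as basis.  The only real work is that [Phi] is then directed
    complete: given a directed [X], the elements of [Ups] way below some
    member of [X] form a directed subset of [Ups] (approximations are
    directed and interpolate), and its supremum is the supremum of [X].
    Focusing on [\top] is the identity, so (SD2) at [\top] yields (D2). *)
From mathcomp Require Import all_boot all_order.
Import Order.TTheory.
Set Implicit Arguments.

Section InfoAlgebraOrder.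
Variables (disp : Order.disp_t) (D : tLatticeType disp) (Phi : Type).
Variables (comb : Phi -> Phi -> Phi) (e : Phi) (foc : Phi -> D -> Phi).
Hypothesis ia : is_info_algebra comb e foc.

Local Notation le := (ia_le comb).
Local Notation wb := (way_below comb).

Lemma ia_le_refl a : le a a.
Proof. by have [x fx] := foc_support ia a; rewrite /ia_le -{2}fx (foc_idempotence ia). Qed.

Lemma ia_le_trans a b c : le a b -> le b c -> le a c.
Proof. by rewrite /ia_le => ab bc; rewrite -bc (comb_assoc ia) ab. Qed.

Lemma ia_le_combl a b : le a (comb a b).
Proof. by rewrite /ia_le (comb_assoc ia) ia_le_refl. Qed.

Lemma ia_le_combr a b : le b (comb a b).
Proof. by rewrite (comb_comm ia); apply: ia_le_combl. Qed.

Lemma ia_le_comb_lub a b c : le a c -> le b c -> le (comb a b) c.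
Proof. by rewrite /ia_le => ac bc; rewrite -(comb_assoc ia) bc ac. Qed.

Lemma directed_comb_closed (X : Phi -> Prop) :
  X e -> (forall a b, X a -> X b -> X (comb a b)) -> directed comb X.
Proof.
move=> Xe Xcomb; split; first by exists e.
move=> a b Xa Xb; exists (comb a b).
by split; [exact: Xcomb | split; [exact: ia_le_combl | exact: ia_le_combr]].
Qed.

Lemma is_sup_widen (X Y : Phi -> Prop) s :
  is_sup comb X s -> (forall a, X a -> Y a) -> is_upper comb Y s ->
  is_sup comb Y s.
Proof. by move=> [_ supX] XY Ys; split=> // u Yu; apply: supX => a /XY /Yu. Qed.

Lemma way_below_le a b : wb a b -> le a b.
Proof.
move=> ab.
have dirb : directed comb (eq^~ b).
  split; first by exists b.
  by move=> _ _ -> ->; exists b; split=> //; split; apply: ia_le_refl.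
have supb : is_sup comb (eq^~ b) b.
  by split=> [_ ->|u]; [apply: ia_le_refl | apply].
by have [_ [->]] := ab _ dirb b supb (ia_le_refl b).
Qed.

Lemma way_below_le_trans a b c : wb a b -> le b c -> wb a c.
Proof. by move=> ab bc X dirX s supX cs; apply: ab dirX s supX (ia_le_trans bc cs). Qed.

Lemma way_below_e b : wb e b.
Proof. by move=> X [[c Xc] _] s _ _; exists c; split=> //; exact: (comb_neutral ia c). Qed.

Lemma way_below_comb a b c : wb a c -> wb b c -> wb (comb a b) c.
Proof.
move=> ac bc X dirX s supX cs.
have [c1 [Xc1 ac1]] := ac X dirX s supX cs.
have [c2 [Xc2 bc2]] := bc X dirX s supX cs.
have [d [Xd [c1d c2d]]] := dirX.2 c1 c2 Xc1 Xc2.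
exists d; split=> //.
by apply: ia_le_comb_lub; [apply: ia_le_trans c1d | apply: ia_le_trans c2d].
Qed.

Lemma foc_e x : foc e x = e.
Proof. by have := (foc_idempotence ia) e x; rewrite (comb_neutral ia). Qed.

Lemma foc_top phi : foc phi \top%O = phi.
Proof. by have [y fy] := foc_support ia phi; rewrite -{1}fy (foc_transitive ia) meet1x. Qed.

Lemma foc_comb_fixed a b x :
  a = foc a x -> b = foc b x -> comb a b = foc (comb a b) x.
Proof. by move=> fa fb; rewrite fa (foc_combination ia) -fa -fb. Qed.

Lemma ia_le_foc psi phi x : psi = foc psi x -> le psi phi -> le psi (foc phi x).
Proof. by rewrite /ia_le => fpsi le_phi; rewrite -{2}le_phi fpsi (foc_combination ia) -fpsi. Qed.

Lemma directed_complete_of_approximation {Ups : Phi -> Prop} :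
  (forall X, (forall a, X a -> Ups a) -> directed comb X ->
     exists s, is_sup comb X s) ->
  (forall phi, exists Y : Phi -> Prop,
     (forall y, Y y -> Ups y /\ wb y phi) /\ directed comb Y /\ is_sup comb Y phi) ->
  forall X, directed comb X -> exists s, is_sup comb X s.
Proof.
move=> Ups_sup approx X dirX.
pose Y a := Ups a /\ exists c, X c /\ wb a c.
have dirY : directed comb Y.
  split.
    have [c Xc] := dirX.1; have [Z [Zapprox [[[z Zz] _] _]]] := approx c.
    by have [Uz zc] := Zapprox z Zz; exists z; split=> //; exists c.
  move=> a1 a2 [_ [c1 [Xc1 a1c1]]] [_ [c2 [Xc2 a2c2]]].
  have [c [Xc [c1c c2c]]] := dirX.2 c1 c2 Xc1 Xc2.
  have [Z [Zapprox [dirZ supZ]]] := approx c.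
  (* interpolation: [a_i << c] lets us find [z_i] in [Z] above [a_i] *)
  have [z1 [Zz1 a1z1]] := way_below_le_trans a1c1 c1c dirZ supZ (ia_le_refl c).
  have [z2 [Zz2 a2z2]] := way_below_le_trans a2c2 c2c dirZ supZ (ia_le_refl c).
  have [z [Zz [z1z z2z]]] := dirZ.2 z1 z2 Zz1 Zz2.
  have [Uz zc] := Zapprox z Zz.
  exists z; split; first by split=> //; exists c.
  by split; [apply: ia_le_trans z1z | apply: ia_le_trans z2z].
have [s [Ys supY]] := Ups_sup Y (fun a => @proj1 _ _) dirY.
exists s; split.
- move=> c Xc; have [Z [Zapprox [_ [_ supZ]]]] := approx c.
  apply: supZ => z Zz; have [Uz zc] := Zapprox z Zz.
  by apply: Ys; split=> //; exists c.
- move=> u Xu; apply: supY => a [_ [c [Xc ac]]].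
  exact: ia_le_trans (way_below_le ac) (Xu c Xc).
Qed.

Lemma continuous_iaP :
  continuous_ia comb e <->
  exists Ups : Phi -> Prop,
    Ups e /\
    (forall X, (forall a, X a -> Ups a) -> directed comb X ->
       exists s, is_sup comb X s) /\
    (forall phi,
       directed comb (fun psi => Ups psi /\ wb psi phi) /\
       is_sup comb (fun psi => Ups psi /\ wb psi phi) phi).
Proof.
split.
  move=> [G [Ge [Gcomb [Gsup Gapprox]]]]; exists G; do 2!split=> //.
  move=> phi; split; last exact: Gapprox.
  apply: directed_comb_closed; first by split; last apply: way_below_e.
  by move=> a b [Ga aphi] [Gb bphi]; split; [apply: Gcomb | apply: way_below_comb].
move=> [U [_ [Usup Uapprox]]]; exists (fun=> True); do 3!split=> //.
  move=> X _; apply: (directed_complete_of_approximation Usup) => phi.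
  by exists (fun psi => U psi /\ wb psi phi); split; [move=> ? [] | apply: Uapprox].
move=> phi; apply: is_sup_widen (Uapprox phi).2 _ _ => [psi [] //|psi [_]].
exact: way_below_le.
Qed.

Lemma s_continuous_iaP :
  s_continuous_ia comb e foc <->
  exists Ups : Phi -> Prop,
    Ups e /\
    (forall X, (forall a, X a -> Ups a) -> directed comb X ->
       exists s, is_sup comb X s) /\
    (forall phi (x : D),
       directed comb (fun psi => Ups psi /\ psi = foc psi x /\ wb psi phi) /\
       is_sup comb (fun psi => Ups psi /\ psi = foc psi x /\ wb psi phi)
              (foc phi x)).
Proof.
split.
  move=> [G [Ge [Gcomb [Gsup Gapprox]]]]; exists G; do 2!split=> //.
  move=> phi x; split; last exact: Gapprox.
  apply: directed_comb_closed; first by rewrite foc_e; do 2!split=> //; apply: way_below_e.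
  move=> a b [Ga [fa aphi]] [Gb [fb bphi]].
  by split; [apply: Gcomb | split; [apply: foc_comb_fixed | apply: way_below_comb]].
move=> [U [_ [Usup Uapprox]]]; exists (fun=> True); do 3!split=> //.
  move=> X _; apply: (directed_complete_of_approximation Usup) => phi.
  exists (fun psi => U psi /\ psi = foc psi \top%O /\ wb psi phi).
  by split; [move=> ? [? []] | rewrite -{3}(foc_top phi); apply: Uapprox].
move=> phi x; apply: is_sup_widen (Uapprox phi x).2 _ _ => [psi [] //|psi [_ [fpsi]]].
by move/way_below_le; apply: ia_le_foc.
Qed.

End InfoAlgebraOrder.

Theorem proposition3p6 (disp : Order.disp_t) (D : tLatticeType disp) (Phi : Type)
    (comb : Phi -> Phi -> Phi) (e : Phi) (foc : Phi -> D -> Phi) :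
  is_info_algebra comb e foc ->
  (continuous_ia comb e <->
     exists Ups : Phi -> Prop,
       Ups e /\
       (forall X, (forall a, X a -> Ups a) -> directed comb X ->
          exists s, is_sup comb X s) /\
       (forall phi,
          directed comb (fun psi => Ups psi /\ way_below comb psi phi) /\
          is_sup comb (fun psi => Ups psi /\ way_below comb psi phi) phi)) /\
  (s_continuous_ia comb e foc <->
     exists Ups : Phi -> Prop,
       Ups e /\
       (forall X, (forall a, X a -> Ups a) -> directed comb X ->
          exists s, is_sup comb X s) /\
       (forall phi (x : D),
          directed comb (fun psi => Ups psi /\ psi = foc psi x /\ way_below comb psi phi) /\
          is_sup comb (fun psi => Ups psi /\ psi = foc psi x /\ way_below comb psi phi)
                 (foc phi x))).
Proof. by move=> ia; split; [apply: continuous_iaP ia | apply: s_continuous_iaP ia]. Qed.
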